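(* Let $\bar{\mathcal{G}}=(\bar{\mathcal{V}},\bar{\mathcal{E}})$ be the edge localization graph of the communication graph $\mathcal{G}$ (as defined in the context). If $\bar{\mathcal{G}}$ has an oriented spanning tree with root vertex $r$, then its directed line graph $L(\bar{\mathcal{G}})=(\bar{\mathcal{E}},L(\bar{\mathcal{E}}))$ has an oriented spanning tree with root edge $(r,v)$ for each neighbor $v$ of $r$ in $\bar{\mathcal{G}}$.
   Context: Setting. There are $N$ agents $\mathcal{V}=\{1,\dots,N\}$ in the plane. A set $\mathcal{S}$ of subtended angle measurements is given: an element $\alpha^{u}_{wv}\in\mathcal{S}$ (with $u,v,w$ distinct agents) is the counterclockwise angle in $[-\pi,\pi)$ measured at agent $u$ from the direction of agent $v$ to the direction of agent $w$; $\alpha^{u}_{wv}\in\mathcal{S}$ if and only if $\alpha^{u}_{vw}=-\alpha^{u}_{wv}\in\mathcal{S}$. The communication graph $\mathcal{G}=(\mathcal{V},\mathcal{E})$ is the directed graph whose edges are exactly the ordered pairs $(u,v),(v,u),(u,w),(w,u)$ for all $\alpha^{u}_{wv}\in\mathcal{S}$; it is symmetric and is assumed connected. Edge localization graph. For each edge $(u,v)\in\mathcal{E}$ such that there is no $w$ with $\alpha^{v}_{wu}\in\mathcal{S}$, introduce a new virtual vertex $\bar v^{u}$ (distinct for distinct such pairs $(u,v)$; co-located with agent $v$). Let $\mathcal{E}^{u}=\{(u,\bar v^{u}),(\bar v^{u},u) : (u,v)\in\mathcal{E},\ \nexists w \text{ with } \alpha^{v}_{wu}\in\mathcal{S}\}$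 and $\mathcal{V}^{u}$ the set of all these virtual vertices. Then $\bar{\mathcal{V}}=\bigl(\mathcal{V}\setminus\{u\in\mathcal{V}: \text{no } \alpha^{u}_{wv}\in\mathcal{S} \text{ for any } v,w\}\bigr)\cup\mathcal{V}^{u}$ and $\bar{\mathcal{E}}=\bigl(\mathcal{E}\setminus\{(u,v),(v,u): (u,v)\in\mathcal{E},\ \nexists w \text{ with }\alpha^{v}_{wu}\in\mathcal{S}\}\bigr)\cup\mathcal{E}^{u}$. A neighbor of $r$ in $\bar{\mathcal{G}}$ is a vertex $v$ with $(r,v)\in\bar{\mathcal{E}}$. For a directed edge $e=(u,v)$, $t(e)=u$, $h(e)=v$. The directed line graph $L(\bar{\mathcal{G}})$ has vertex set $\bar{\mathcal{E}}$ and edge set $L(\bar{\mathcal{E}})=\{(e_1,e_2): h(e_1)=t(e_2)\}$. An oriented spanning tree of a directed graph with root $r$ is an acyclic subgraph containing all vertices in which every vertex other than $r$ has a directed path to $r$. *)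

From mathcomp Require Import all_boot.
Set Implicit Arguments. Unset Strict Implicit. Unset Printing Implicit Defensive.

Section Digraph.
Variable V : finType.

Definition edge_rel (F : {set V * V}) : rel V := fun a b => (a, b) \in F.

Definition und_rel (F : {set V * V}) : rel V :=
  fun a b => ((a, b) \in F) || ((b, a) \in F).

(* F is acyclic (as an undirected multigraph, where (a,b) and (b,a) are two
   distinct edges): removing any single edge disconnects its endpoints.
   In particular loops and 2-cycles (a,b),(b,a) are cycles. *)
Definition acyclic_edges (F : {set V * V}) : Prop :=
  forall e, e \in F -> ~~ connect (und_rel (F :\ e)) e.1 e.2.

Definition oriented_spanning_tree (VV : {set V}) (EE : {set V * V}) (r : V) : Prop :=
  exists F : {set V * V},
    [/\ F \subset EE, acyclic_edges F, r \in VV &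
        forall x, x \in VV -> connect (edge_rel F) x r].

Definition line_edges (EE : {set V * V}) : {set (V * V) * (V * V)} :=
  [set p | [&& p.1 \in EE, p.2 \in EE & p.1.2 == p.2.1]].
End Digraph.

Section EdgeLoc.
Variable N : nat.
Notation agent := 'I_N.
(* S : the set of subtended angle measurements; (u, w, v) \in S encodes that
   alpha^u_{wv} \in S (angle at u from direction of v to direction of w). *)
Variable S : {set agent * agent * agent}.

(* communication graph edges: (u,v),(v,u),(u,w),(w,u) for alpha^u_{wv} in S *)
Definition comm_edge (a b : agent) : bool :=
  [exists x : agent,
     [|| (a, x, b) \in S, (b, x, a) \in S, (a, b, x) \in S | (b, a, x) \in S]].

Definition sees (v u : agent) : bool := [exists w : agent, (v, w, u) \in S].

Definition measuring (u : agent) : bool :=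
  [exists v : agent, exists w : agent, (u, w, v) \in S].

(* (u,v) in E with no w such that alpha^v_{wu} in S: gives virtual vertex vbar^u *)
Definition virt (u v : agent) : bool := comm_edge u v && ~~ sees v u.

(* vertices of the edge localization graph: agents (inl u) and
   virtual vertices (inr (u, v)) standing for vbar^u *)
Definition locV := (agent + (agent * agent))%type.

Definition Vbar : {set locV} :=
  [set x : locV | match x with
                  | inl u => measuring u
                  | inr (u, v) => virt u v
                  end].

Definition removed (a b : agent) : bool := virt a b || virt b a.

Definition Ebar : {set locV * locV} :=
  [set e : locV * locV |
     match e with
     | (inl a, inl b) => comm_edge a b && ~~ removed a b
     | (inl a, inr (u, v)) => (a == u) && virt u v
     | (inr (u, v), inl a) => (a == u) && virt u v
     | (inr _, inr _) => false
     end].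
End EdgeLoc.

From mathcomp Require Import all_boot.
Set Implicit Arguments. Unset Strict Implicit. Unset Printing Implicit Defensive.

(* Only reachability matters.  Every edge (a, b) of the edge localization graph ends
   in one of its vertices (here the symmetry of S is needed), so b reaches r;
   following that path edge by edge and then stepping onto (r, v) shows that
   (a, b) reaches (r, v) in the line graph.  In any digraph in which every
   vertex reaches the root, a breadth-first tree is an oriented spanning tree:
   each vertex points to a neighbour strictly closer to the root, and the
   strictly decreasing distance rules out cycles. *)

Section ParentForest.
Variables (V : finType) (P : {pred V}) (f : V -> V) (rank : V -> nat).
Hypothesis rank_f : forall x, rank (f x) <= rank x.
Hypothesis rank_f_lt : {in P, forall x, rank (f x) < rank x}.

Definition parent_edges : {set V * V} := [set ab | (ab.1 \in P) && (ab.2 == f ab.1)].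

Lemma in_parent_edges a b : ((a, b) \in parent_edges) = (a \in P) && (b == f a).
Proof. by rewrite inE. Qed.

Lemma fconnect_rank x y : fconnect f x y -> rank y <= rank x.
Proof.
case/connectP=> s; elim: s x => [|z s IHs] x /=; first by move=> _ ->.
by case/andP=> /eqP <- fs /(IHs _ fs)/leq_trans; apply.
Qed.

(* Removing the edge (x0, f x0) leaves the set of vertices whose f-orbit
   meets x0 closed; it contains x0 but not f x0, since rank decreases. *)
Lemma acyclic_parent_edges : acyclic_edges parent_edges.
Proof.
move=> [x0 _] /[!in_parent_edges] /andP[Px0 /eqP->] /=.
pose D := [pred y | fconnect f y x0].
have clD : closed (und_rel (parent_edges :\ (x0, f x0))) D.
  have keyD a b : (a, b) \in parent_edges :\ (x0, f x0) -> (a \in D) = (b \in D).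
    rewrite !inE /= => /andP[ne /andP[_ /eqP bE]]; subst b.
    have ax0 : a != x0 by apply: contraNneq ne => ->.
    by rewrite /= fconnect_eqVf (negbTE ax0).
  by move=> a b /orP[/keyD | /keyD ->].
apply/negP => /(closed_connect clD); rewrite !inE connect0 => /esym/fconnect_rank.
by rewrite leqNgt rank_f_lt.
Qed.

Lemma connect_parent_edges x : x \in P -> connect (edge_rel parent_edges) x (f x).
Proof. by move=> Px; apply: connect1; rewrite /edge_rel in_parent_edges Px eqxx. Qed.

End ParentForest.

Section ShortestPaths.
Variables (V : finType) (e : rel V) (r : V).

Fixpoint within (n : nat) (x : V) : bool :=
  if n is n'.+1 then (x == r) || [exists y, e x y && within n' y] else x == r.

Lemma within_connect n x : within n x -> connect e x r.
Proof.
elim: n x => [|n IHn] x /=; first by move/eqP->.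
case/orP=> [/eqP-> // | /existsP[y /andP[xy /IHn]]].
exact/connect_trans/connect1.
Qed.

Lemma connect_within x : connect e x r -> exists n, within n x.
Proof.
case/connectP=> s; elim: s x => [|y s IHs] x /=; first by move=> _ <-; exists 0 => /=.
case/andP=> xy /IHs/[apply] -[n yn]; exists n.+1.
by apply/orP; right; apply/existsP; exists y; rewrite xy.
Qed.

Lemma dist_subproof x : exists n, connect e x r ==> within n x.
Proof.
case: (boolP (connect e x r)) => [/connect_within[n xn] | _]; last by exists 0.
by exists n; rewrite xn.
Qed.

Definition dist x := ex_minn (dist_subproof x).

Lemma within_dist x : connect e x r -> within (dist x) x.
Proof. by rewrite /dist; case: ex_minnP => n /implyP. Qed.

Lemma dist_min n x : within n x -> dist x <= n.
Proof. by move=> xn; rewrite /dist; case: ex_minnP => m _; apply; rewrite xn implybT. Qed.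

Definition bfs_parent x := odflt x [pick y | e x y && within (dist x).-1 y].

Lemma dist_bfs_parent x : dist (bfs_parent x) <= dist x.
Proof.
rewrite /bfs_parent; case: pickP => //= y /andP[_ /dist_min].
by move/leq_trans; apply; apply: leq_pred.
Qed.

Lemma connect_bfs_parent x : connect e x r -> connect e (bfs_parent x) r.
Proof. by rewrite /bfs_parent; case: pickP => //= y /andP[_ /within_connect]. Qed.

Lemma bfs_parent_step x : connect e x r -> x != r ->
  e x (bfs_parent x) /\ dist (bfs_parent x) < dist x.
Proof.
move=> /within_dist; rewrite /bfs_parent; case: (dist x) => [|n] /= xn xr.
  by rewrite xn in xr.
case: pickP => /= [y /andP[xy /dist_min yn] // | none].
by move: xn; rewrite (negbTE xr) => /existsP[y]; rewrite none.
Qed.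

End ShortestPaths.

Lemma connect_oriented_spanning_tree (V : finType) (VV : {set V}) (EE : {set V * V}) r :
  r \in VV -> (forall x, x \in VV -> connect (edge_rel EE) x r) ->
  oriented_spanning_tree VV EE r.
Proof.
move=> rV VVr; set e := edge_rel EE.
pose P := [pred x | connect e x r && (x != r)].
have parent_P : {in P, forall x,
    e x (bfs_parent e r x) /\ dist e r (bfs_parent e r x) < dist e r x}.
  by move=> x /andP[xr ne]; apply: bfs_parent_step.
exists (parent_edges P (bfs_parent e r)); split=> //.
- apply/subsetP=> -[a b]; rewrite in_parent_edges => /andP[Pa /eqP->].
  by case: (parent_P a Pa).
- apply: (acyclic_parent_edges (rank := dist e r)); first exact: dist_bfs_parent.
  by move=> x /parent_P[].
move=> x /VVr; have [n dx] : exists n, dist e r x < n by exists (dist e r x).+1.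
elim: n x dx => [|n IHn] x dx xr; first by rewrite ltn0 in dx.
case: (eqVneq x r) => [-> // | ne].
have Px : x \in P by rewrite inE xr ne.
have [_ dp] := parent_P x Px.
apply: connect_trans (connect_parent_edges (bfs_parent e r) Px) _.
exact: IHn (leq_trans dp dx) (connect_bfs_parent xr).
Qed.

Lemma connect_line_edges (V : finType) (EE : {set V * V}) a b c d :
  (a, b) \in EE -> (c, d) \in EE -> connect (edge_rel EE) b c ->
  connect (edge_rel (line_edges EE)) (a, b) (c, d).
Proof.
move=> ab cd /connectP[s]; elim: s a b ab => [|y s IHs] a b ab /=.
  by move=> _ bc; subst c; apply: connect1; rewrite /edge_rel inE ab cd eqxx.
case/andP=> b_y /IHs/[apply] yc; apply: connect_trans (connect1 _) (yc b b_y).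
by rewrite /edge_rel inE ab eqxx andbT.
Qed.

Section EdgeLocalization.
Variables (N : nat) (S : {set 'I_N * 'I_N * 'I_N}).
Hypothesis S_sym : forall u w v : 'I_N, (u, w, v) \in S -> (u, v, w) \in S.

Lemma sees_measuring v u : sees S v u -> measuring S v.
Proof. by case/existsP=> w vwu; apply/existsP; exists u; apply/existsP; exists w. Qed.

Lemma virt_measuring u v : virt S u v -> measuring S u.
Proof.
case/andP=> /existsP[x] + not_sees.
have nS w : (v, w, u) \notin S by apply: contra not_sees => vwu; apply/existsP; exists w.
case/or4P=> [uxv | vxu | uvx | vux].
- by apply/existsP; exists v; apply/existsP; exists x.
- by move: (nS x); rewrite vxu.
- by apply/existsP; exists x; apply/existsP; exists v.
- by move: (nS x); rewrite S_sym.
Qed.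

Lemma Ebar_head_in_Vbar a b : (a, b) \in Ebar S -> b \in Vbar S.
Proof.
rewrite !inE; case: a => [a | [u v]]; case: b => [b | [u' v']] //.
- case/andP=> ab; rewrite /removed /virt ab negb_or /= negbK.
  by case/andP=> /sees_measuring.
- by case/andP.
- by case/andP=> /eqP-> /virt_measuring.
Qed.

End EdgeLocalization.

Theorem lemma5 (N : nat) (S : {set 'I_N * 'I_N * 'I_N})
  (S_distinct : forall u w v : 'I_N, (u, w, v) \in S ->
                  [&& u != v, u != w & w != v])
  (S_sym : forall u w v : 'I_N, (u, w, v) \in S -> (u, v, w) \in S)
  (G_connected : forall a b : 'I_N, connect (comm_edge S) a b)
  (r : locV N) :
  oriented_spanning_tree (Vbar S) (Ebar S) r ->
  forall v : locV N, (r, v) \in Ebar S ->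
    oriented_spanning_tree (Ebar S) (line_edges (Ebar S)) (r, v).
Proof.
move=> [F [sub_F_Ebar _ rV F_to_r]] v rv.
apply: connect_oriented_spanning_tree => // -[a b] ab.
apply: connect_line_edges => //.
apply: connect_sub (F_to_r _ (Ebar_head_in_Vbar S_sym ab)) => x y xy.
exact/connect1/(subsetP sub_F_Ebar).
Qed.
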